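(* Let $A$ be the adjacency matrix of a regular network, let $\lambda$ be an eigenvalue of $A$ with $l$-dimensional generalized eigenspace $G_\lambda$ ($l\ge 1$), and for each positive integer $j$ set $N^j=\operatorname{Ker}(A-\lambda I)\cap\operatorname{Im}(A-\lambda I)^{j-1}$. Then for every $1\le k\le l$ and every one-dimensional subspace $J_1$ of $N^k$ which is special in $N^k$, there exists a $k$-dimensional special Jordan subspace to the network (contained in $G_\lambda$) that contains $J_1$.
   Context: A regular network is a finite directed graph on cells $1,\dots,n$ (loops and multiple arrows allowed) in which every cell receives the same number $v$ of arrows (the valency). Its adjacency matrix $A=[a_{ij}]$ has $a_{ij}$ equal to the number of arrows cell $i$ receives from cell $j$; every row sum is $v$. $A$ acts on $\mathbb{C}^n$. A polydiagonal is a subspace of $\mathbb{C}^n$ of the form $\{x : x_i=x_j \text{ for all } (i,j)\in R\}$ for some (possibly empty) set $R$ of index pairs. $F=\{x_1=\cdots=x_n\}$ is the fully synchrony subspace. $P(W)$ is the smallest polydiagonal containing a subspace $W$. For a subspace $E\subseteq\mathbb{C}^n$, a subspace $W\subseteq E$ is special in $E$ if for every subspace $U\subseteq E$ with $\dim U=\dim W$ and $P(U)\subseteq P(W)$ one has $P(U)=P(W)$. The generalized eigenspace of $\lambda$ is $G_\lambda=\operatorname{Ker}(A-\lambda I)^p$ for $p$ large. A Jordan chain of length $k$ for $\lambda$ is a sequence of nonzero vectors $x_1,\dots,x_k$ with $(A-\lambda I)x_1=0$ and $(A-\lambda I)x_i=x_{i-1}$ for $2\le i\le k$; a Jordan subspace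 is the span of a Jordan chain. A Jordan subspace $W$ of a generalized eigenspace $G$ is a special Jordan subspace to the network if for every Jordan subspace $U$ of $G$ with $\dim U=\dim W$ and $P(U)\subseteq P(W)$, either $P(U)=P(W)$ or $U=F$. *)

(* Vectors of C^n are row vectors 'rV[algC]_n; a subspace is
   the row space of a square matrix 'M[algC]_n (mxalgebra, scope %MS).
   A acts on column vectors; on row vectors x the action is x *m A^T. *)
From HB Require Import structures.
From mathcomp Require Import all_boot all_order all_algebra all_field.
Set Implicit Arguments. Unset Strict Implicit. Unset Printing Implicit Defensive.
Import Order.TTheory GRing.Theory Num.Theory.
Local Open Scope ring_scope.

Definition regular_network (n : nat) (A : 'M[nat]_n) :=
  exists v : nat, forall i : 'I_n, (\sum_(j < n) A i j)%N = v.

Definition Amx (n : nat) (A : 'M[nat]_n) : 'M[algC]_n := map_mx (fun k => k%:R) A.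

(* transpose of (A - lambda I): right multiplication of row vectors *)
Definition Bt (n : nat) (A : 'M[nat]_n) (lam : algC) : 'M[algC]_n :=
  (Amx A - lam%:M)^T.

(* iterated matrix power (without needing a ring structure on 'M_n) *)
Definition powm (n : nat) (M : 'M[algC]_n) (p : nat) : 'M[algC]_n :=
  iter p (fun X => X *m M) 1%:M.

Definition Gsp (n : nat) (A : 'M[nat]_n) (lam : algC) : 'M[algC]_n :=
  kermx (powm (Bt A lam) n).

Definition Nsp (n : nat) (A : 'M[nat]_n) (lam : algC) (j : nat) : 'M[algC]_n :=
  (kermx (Bt A lam) :&: powm (Bt A lam) j.-1)%MS.

Definition Fsp (n : nat) : 'rV[algC]_n := const_mx 1.

Definition in_polydiag (n : nat) (R : rel 'I_n) (x : 'rV[algC]_n) : Prop :=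
  forall i j, R i j -> x 0 i = x 0 j.

(* P(W): the smallest polydiagonal containing W, i.e. the intersection of
   all polydiagonals containing W *)
Definition Pset (n : nat) (W : 'M[algC]_n) (x : 'rV[algC]_n) : Prop :=
  forall R : rel 'I_n,
    (forall w : 'rV[algC]_n, (w <= W)%MS -> in_polydiag R w) -> in_polydiag R x.

Definition Psub (n : nat) (U W : 'M[algC]_n) : Prop :=
  forall x, Pset U x -> Pset W x.

Definition Peq (n : nat) (U W : 'M[algC]_n) : Prop := Psub U W /\ Psub W U.

Definition special_in (n : nat) (E W : 'M[algC]_n) : Prop :=
  forall U : 'M[algC]_n, (U <= E)%MS -> \rank U = \rank W -> Psub U W -> Peq U W.

(* Jordan chain x_1,...,x_k (indexed 0..k-1) for lambda *)
Definition jordan_chain (n : nat) (A : 'M[nat]_n) (lam : algC) (k : nat)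
  (x : nat -> 'rV[algC]_n) : Prop :=
  [/\ (forall i, (i < k)%N -> x i != 0),
      x 0%N *m Bt A lam = 0 &
      (forall i, (i.+1 < k)%N -> x i.+1 *m Bt A lam = x i)].

Definition jordan_subspace (n : nat) (A : 'M[nat]_n) (lam : algC)
  (W : 'M[algC]_n) : Prop :=
  (W <= Gsp A lam)%MS /\
  exists k (x : nat -> 'rV[algC]_n),
    jordan_chain A lam k x /\ (W == \matrix_(i < k) x i)%MS.

Definition special_jordan (n : nat) (A : 'M[nat]_n) (lam : algC)
  (W : 'M[algC]_n) : Prop :=
  jordan_subspace A lam W /\
  forall U : 'M[algC]_n, jordan_subspace A lam U -> \rank U = \rank W ->
    Psub U W -> Peq U W \/ (U == Fsp n)%MS.

From HB Require Import structures.
From mathcomp Require Import all_boot all_order all_algebra all_field.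
From Stdlib Require Import Classical.
From mathcomp Require Import zify ring.
Set Implicit Arguments. Unset Strict Implicit. Unset Printing Implicit Defensive.
Import Order.TTheory GRing.Theory Num.Theory.
Local Open Scope ring_scope.

(* Vectors are rows, so A - lam I acts as M := (A - lam I)^T on the
   right; put K := k - 1, so that N^k = ker M :&: Im M^K, and let x1 span J1.

   1. Specialness of J1 in N^k pins it: a vector of N^k constant on every
      level set of x1 is a multiple of x1 (special_line_pinned).
   2. Constancy on the level sets of x1 is a family of linear constraints, of
      which a subfamily maps N^k onto its range and cuts out the same subspace
      of N^k (select_constraints).
   3. Correcting a preimage of x1 under M^K by vectors of N^k, we get a Jordan
      chain x1 = x M^K, ..., x M, x all of whose vectors satisfy this
      subfamily (lift_with_constraints).  Its span W0 is a k-dimensional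
      Jordan subspace through J1 whose polydiagonal pins J1 in N^k
      (pinned_jordan_subspace).
   4. Among the k-dimensional Jordan subspaces U through J1 with P(U) <= P(W0),
      pick W with the most synchronised pairs.  A k-dimensional Jordan
      subspace U with P(U) <= P(W) has its head eigenvector in N^k and in
      P(W0), hence contains J1 (pinned_line_in_jordan); so U competes with W
      and maximality forces P(U) = P(W). *)

Lemma powm0 n (M : 'M[algC]_n) : powm M 0 = 1%:M.
Proof. by []. Qed.

Lemma powmS n (M : 'M[algC]_n) p : powm M p.+1 = powm M p *m M.
Proof. by rewrite /powm iterS. Qed.

Lemma powmD n (M : 'M[algC]_n) a b : powm M (a + b) = powm M a *m powm M b.
Proof.
elim: b => [|b IH]; first by rewrite addn0 powm0 mulmx1.
by rewrite addnS !powmS IH mulmxA.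
Qed.

Lemma powm1 n (M : 'M[algC]_n) : powm M 1 = M.
Proof. by rewrite powmS powm0 mul1mx. Qed.

Lemma ker_powm n (M : 'M[algC]_n) (h : 'rV_n) p :
  h *m M = 0 -> (0 < p)%N -> h *m powm M p = 0.
Proof.
move=> hM; case: p => // p _.
by rewrite -[p.+1]add1n powmD powm1 mulmxA hM mul0mx.
Qed.

(* The cells i and j are synchronised by the subspace W when every vector of W
   has equal i- and j-coordinates; P(W) is the polydiagonal of these pairs. *)
Definition synced m n (W : 'M[algC]_(m, n)) i j :=
  forall w : 'rV_n, (w <= W)%MS -> w 0 i = w 0 j.

(* Boolean version: it suffices to compare the rows of W. *)
Definition syncedb m n (W : 'M[algC]_(m, n)) i j := [forall r, W r i == W r j].

Lemma syncedP m n (W : 'M[algC]_(m, n)) i j : reflect (synced W i j) (syncedb W i j).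
Proof.
apply: (iffP forallP) => [Hrows w /submxP [D ->] | Hsync r].
  by rewrite !mxE; apply: eq_bigr => r _; rewrite (eqP (Hrows r)).
by apply/eqP; have := Hsync _ (row_sub r W); rewrite !mxE.
Qed.

Lemma synced_eqmx m1 m2 n (U : 'M[algC]_(m1, n)) (V : 'M[algC]_(m2, n)) i j :
  (U :=: V)%MS -> synced U i j <-> synced V i j.
Proof. by move=> eUV; split=> Hs w; [rewrite -eUV | rewrite eUV]; apply: Hs. Qed.

Lemma synced_line m n (W : 'M[algC]_(m, n)) (x : 'rV_n) i j :
  (x :=: W)%MS -> synced W i j <-> x 0 i = x 0 j.
Proof.
move=> exW; rewrite -(synced_eqmx i j exW).
split=> [Hs | eij w /submxP [D ->]]; first exact: Hs.
by rewrite !mxE !big_ord1 eij.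
Qed.

Lemma PsetE n (W : 'M[algC]_n) x :
  Pset W x <-> forall i j, synced W i j -> x 0 i = x 0 j.
Proof.
split=> [HP i j Hij | Hx R HR i j Rij].
  apply: (HP (syncedb W)); last exact/syncedP.
  by move=> w wW i' j' /syncedP; apply.
by apply: Hx => w wW; apply: HR.
Qed.

Lemma PsubE n (U W : 'M[algC]_n) :
  Psub U W <-> forall i j, synced W i j -> synced U i j.
Proof.
split=> [HP i j HW w wU | Hs x].
  have /HP /PsetE : Pset U w by move=> R HR; apply: HR.
  exact.
by rewrite !PsetE => Hx i j /Hs; apply: Hx.
Qed.

Lemma ex_max_measure (T : Type) (F : T -> Prop) (c : T -> nat) (b : nat) :
  (forall x, F x -> (c x <= b)%N) -> (exists x, F x) ->
  exists x, F x /\ forall y, F y -> (c y <= c x)%N.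
Proof.
move=> bounded [x0 Fx0].
suff gap d x : F x -> (b - c x <= d)%N ->
    exists x, F x /\ forall y, F y -> (c y <= c x)%N by apply: (gap _ x0 Fx0).
elim: d x => [|d IH] x Fx gap_x.
  by exists x; split=> // y Fy; have := bounded _ Fy; lia.
have [[y [Fy lt_xy]] | no_larger] := classic (exists y, F y /\ (c x < c y)%N).
  by apply: (IH y Fy); have := bounded _ Fy; lia.
exists x; split=> // y Fy; rewrite leqNgt; apply/negP => lt_xy.
by apply: no_larger; exists y.
Qed.

(* The set of synchronised pairs; P(U) <= P(W) reverses inclusion of these
   sets, so P(U) = P(W) as soon as they have the same size. *)
Definition sync_pairs n (U : 'M[algC]_n) : {set 'I_n * 'I_n} :=
  [set p | syncedb U p.1 p.2].

Lemma Psub_sync_pairs n (U W : 'M[algC]_n) :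
  Psub U W -> sync_pairs W \subset sync_pairs U.
Proof.
move/PsubE=> HUW; apply/subsetP => p; rewrite !inE => /syncedP Hp.
exact/syncedP/HUW.
Qed.

Lemma Peq_sync_pairs n (U W : 'M[algC]_n) :
  Psub U W -> (#|sync_pairs U| <= #|sync_pairs W|)%N -> Peq U W.
Proof.
move=> HUW le_card; split => //; apply/PsubE => i j HU.
have sWU := Psub_sync_pairs HUW.
have /eqP eqUW : sync_pairs W == sync_pairs U.
  by rewrite -(subset_leqif_cards sWU).2 eqn_leq (subset_leqif_cards sWU).1.
have : (i, j) \in sync_pairs W by rewrite eqUW inE; apply/syncedP.
by rewrite inE => /syncedP.
Qed.

Section SpecialLine.
Variables (n : nat) (E J1 : 'M[algC]_n) (x1 : 'rV[algC]_n).
Hypotheses (ex1 : (x1 :=: J1)%MS) (x1_neq0 : x1 != 0).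
Hypotheses (J1E : (J1 <= E)%MS) (J1_special : special_in E J1).

(* A nonzero v in E constant on the level sets of x1 has the same level sets:
   otherwise the line <<v>> would contradict the specialness of J1. *)
Lemma special_line_levels (v : 'rV_n) :
  (v <= E)%MS -> v != 0 -> (forall i j, x1 0 i = x1 0 j -> v 0 i = v 0 j) ->
  forall i j, v 0 i = v 0 j -> x1 0 i = x1 0 j.
Proof.
move=> vE v_neq0 vlev i j vij.
have ev := genmxE v.
have sub_vJ1 : Psub <<v>>%MS J1.
  apply/PsubE => a b /(synced_line a b ex1) x1ab.
  exact/(synced_line a b (eqmx_sym ev))/vlev.
have gen_vE : (<<v>> <= E)%MS by rewrite ev.
have rk_v : \rank <<v>> = \rank J1 by rewrite ev -ex1 !rank_rV v_neq0 x1_neq0.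
have [_ /PsubE sub_J1v] := J1_special gen_vE rk_v sub_vJ1.
by apply/(synced_line i j ex1)/sub_J1v/(synced_line i j (eqmx_sym ev)).
Qed.

Lemma special_line_pinned (h : 'rV_n) :
  (h <= E)%MS -> (forall i j, x1 0 i = x1 0 j -> h 0 i = h 0 j) -> (h <= x1)%MS.
Proof.
move=> hE hlev.
have x1E : (x1 <= E)%MS by rewrite ex1.
case: (classic (exists i j, x1 0 i != x1 0 j)) => [[i [j x1ij]] | x1_const].
  have dx1 : x1 0 i - x1 0 j != 0 by rewrite subr_eq0.
  pose v := (h 0 i - h 0 j) *: x1 - (x1 0 i - x1 0 j) *: h.
  have [v0 | v_neq0] := eqVneq v 0.
    have -> : h = ((h 0 i - h 0 j) / (x1 0 i - x1 0 j)) *: x1.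
      apply/rowP => l; move/rowP: v0 => /(_ l); rewrite !mxE => /eqP.
      by rewrite subr_eq0 => /eqP e; rewrite mulrAC e mulrC mulrA mulVf // mul1r.
    exact: scalemx_sub.
  have vE : (v <= E)%MS by rewrite addmx_sub ?eqmx_opp ?scalemx_sub.
  have vlev i' j' : x1 0 i' = x1 0 j' -> v 0 i' = v 0 j'.
    by move=> e; rewrite !mxE e (hlev _ _ e).
  have vij : v 0 i = v 0 j by rewrite !mxE; ring.
  by rewrite (special_line_levels vE v_neq0 vlev vij) eqxx in x1ij.
have [i0 x1i0] : exists i0, x1 0 i0 != 0.
  apply/existsP; apply: contraR x1_neq0 => /existsPn x1_0.
  by apply/eqP/rowP => l; rewrite mxE; apply/eqP; move: (x1_0 l); rewrite negbK.
have x1l l : x1 0 l = x1 0 i0.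
  by apply: NNPP => ne; apply: x1_const; exists l, i0; apply/eqP.
have -> : h = (h 0 i0 / x1 0 i0) *: x1.
  by apply/rowP => l; rewrite !mxE (hlev _ _ (x1l l)) x1l mulfVK.
exact: scalemx_sub.
Qed.

End SpecialLine.

(* Being constant on the level sets of x1 is the linear condition y Q^T = 0,
   where Q has the row e_i - e_j for each pair (i, j) with x1_i = x1_j. *)
Definition level_constraints n (x1 : 'rV[algC]_n) : 'M[algC]_(#|{: 'I_n * 'I_n}|, n) :=
  \matrix_(t, l)
     (if x1 0 (enum_val t).1 == x1 0 (enum_val t).2
      then ((l == (enum_val t).1)%:R - (l == (enum_val t).2)%:R) else 0).

Lemma level_constraintsE n (x1 y : 'rV[algC]_n) t :
  (y *m (level_constraints x1)^T) 0 t =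
  (if x1 0 (enum_val t).1 == x1 0 (enum_val t).2
   then y 0 (enum_val t).1 - y 0 (enum_val t).2 else 0).
Proof.
have coord i : \sum_(l < n) y 0 l * (l == i)%:R = y 0 i.
  rewrite (bigD1 i) //= eqxx mulr1 big1 ?addr0 // => l /negbTE ->.
  by rewrite mulr0.
rewrite mxE; under eq_bigr => l _ do rewrite !mxE.
case: ifP => _; last by rewrite big1 // => l _; rewrite mulr0.
by under eq_bigr => l _ do rewrite mulrBr; rewrite sumrB !coord.
Qed.

Lemma level_constraintsP n (x1 y : 'rV[algC]_n) :
  y *m (level_constraints x1)^T = 0 <->
  forall i j, x1 0 i = x1 0 j -> y 0 i = y 0 j.
Proof.
split=> [/rowP Hy i j e | Hlev].
  move: (Hy (enum_rank (i, j))); rewrite level_constraintsE !mxE enum_rankK /= e.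
  by rewrite eqxx => /eqP; rewrite subr_eq0 => /eqP.
apply/rowP => t; rewrite level_constraintsE mxE.
by case: ifP => // /eqP /Hlev ->; rewrite subrr.
Qed.

Lemma rowsub_constraintsE m n p (f : 'I_p -> 'I_m) (Q : 'M[algC]_(m, n)) (y : 'rV_n) s :
  (y *m (rowsub f Q)^T) 0 s = (y *m Q^T) 0 (f s).
Proof. by rewrite !mxE; apply: eq_bigr => l _; rewrite !mxE. Qed.

Lemma rowsub_constraints0 m n p (f : 'I_p -> 'I_m) (Q : 'M[algC]_(m, n)) (y : 'rV_n) :
  y *m Q^T = 0 -> y *m (rowsub f Q)^T = 0.
Proof. by move=> yQ; apply/rowP => s; rewrite rowsub_constraintsE yQ !mxE. Qed.

Lemma rowsub_level_pair n (x1 y : 'rV[algC]_n) r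
    (f : 'I_r -> 'I_#|{: 'I_n * 'I_n}|) s :
  y *m (rowsub f (level_constraints x1))^T = 0 ->
  x1 0 (enum_val (f s)).1 = x1 0 (enum_val (f s)).2 ->
  y 0 (enum_val (f s)).1 = y 0 (enum_val (f s)).2.
Proof.
move=> /rowP /(_ s); rewrite rowsub_constraintsE level_constraintsE mxE => + e.
by rewrite e eqxx => /eqP; rewrite subr_eq0 => /eqP.
Qed.

Lemma select_constraints m n (Q : 'M[algC]_(m, n)) (N : 'M[algC]_n) :
  exists r (f : 'I_r -> 'I_m),
    (forall t : 'rV_r, exists2 h : 'rV_n, (h <= N)%MS & h *m (rowsub f Q)^T = t) /\
    (forall h : 'rV_n, (h <= N)%MS -> h *m (rowsub f Q)^T = 0 -> h *m Q^T = 0).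
Proof.
pose R := Q *m N^T; exists (\rank R), (maxrankfun R); split.
  move=> t.
  have := maxrowsub_free R; rewrite -mul_rowsub_mx => fr.
  have rf : row_full (N *m (rowsub (maxrankfun R) Q)^T).
    by rewrite /row_full -mxrank_tr trmx_mul trmxK (eqP fr).
  have /submxP [a ->] := submx_full t rf.
  by exists (a *m N); rewrite ?submxMl ?mulmxA.
move=> h /submxP [a ->] H0.
have /submxP [L eL] : (R <= rowsub (maxrankfun R) R)%MS by rewrite eq_maxrowsub.
rewrite -mul_rowsub_mx in eL.
rewrite -mulmxA -[N *m Q^T]trmxK trmx_mul trmxK -/R eL !trmx_mul !mulmxA.
by rewrite trmxK H0 mul0mx.
Qed.

(* The preimage is corrected
   degree by degree, from m = K - 1 down to 0, by adding w M^(K - m) with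
   w M^K in the kernel of M: this fixes the m-th image and does not disturb
   x M^K nor the higher images. *)
Lemma lift_with_constraints n (M : 'M[algC]_n) K r (Qf : 'M[algC]_(r, n)) (x1 : 'rV_n) :
  (forall t : 'rV_r, exists2 h : 'rV_n,
      (h <= kermx M :&: powm M K)%MS & h *m Qf^T = t) ->
  (x1 <= powm M K)%MS ->
  exists2 x : 'rV_n, x *m powm M K = x1 &
    forall m, (m < K)%N -> x *m powm M m *m Qf^T = 0.
Proof.
move=> onto x1K.
suff lift s : (s <= K)%N -> exists2 x : 'rV_n, x *m powm M K = x1 &
    forall m, (K - s <= m < K)%N -> x *m powm M m *m Qf^T = 0.
  by have [x xK Hx] := lift K (leqnn K); exists x => // m mK; rewrite Hx ?subnn.
elim: s => [|s IH] sK.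
  by have /submxP [w ->] := x1K; exists w => // m; lia.
have [x xK Hx] := IH (ltnW sK).
pose m0 := (K - s.+1)%N.
have [h hN hQ] := onto (- (x *m powm M m0 *m Qf^T)).
move: hN; rewrite sub_capmx sub_kermx => /andP [/eqP hM /submxP [w hw]].
exists (x + w *m powm M (K - m0)).
  rewrite mulmxDl xK -mulmxA -powmD addnC powmD mulmxA -hw ker_powm ?addr0 //.
  by rewrite /m0; lia.
move=> m /andP [m0m mK].
rewrite !mulmxDl -(mulmxA w) -powmD.
have [-> | ne] := eqVneq m m0.
  have -> : (K - m0 + m0 = K)%N by rewrite /m0; lia.
  by rewrite -hw hQ addrN.
have -> : (K - m0 + m = K + (m - m0))%N by rewrite /m0; lia.
rewrite powmD mulmxA -hw (@ker_powm _ _ _ (m - m0) hM); last by rewrite /m0 in ne m0m *; lia.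
by rewrite mul0mx addr0; apply: Hx; rewrite /m0 in m0m ne *; lia.
Qed.

Definition chain_mx n (M : 'M[algC]_n) K (x : 'rV_n) : 'M[algC]_(K.+1, n) :=
  \matrix_(j < K.+1) (x *m powm M (K - j)).

Section JordanChain.
Variables (n : nat) (M : 'M[algC]_n) (K : nat) (x : 'rV[algC]_n).
Let x1 := x *m powm M K.
Hypotheses (x1_neq0 : x1 != 0) (x1M : x1 *m M = 0).

Lemma chain_pow j s :
  (j <= K)%N -> (j <= s)%N -> x *m powm M (K - j) *m powm M s = x1 *m powm M (s - j).
Proof.
move=> jK js; rewrite -mulmxA -powmD.
have -> : (K - j + s = K + (s - j))%N by lia.
by rewrite powmD mulmxA.
Qed.

Lemma chain_links :
  [/\ forall i, (i < K.+1)%N -> x *m powm M (K - i) != 0,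
      x *m powm M (K - 0) *m M = 0 &
      forall i, (i.+1 < K.+1)%N -> x *m powm M (K - i.+1) *m M = x *m powm M (K - i)].
Proof.
split.
- move=> i iK; apply: contraNneq x1_neq0 => e.
  have iK' : (i <= K)%N by lia.
  have := chain_pow iK' (leqnn i).
  by rewrite e mul0mx subnn powm0 mulmx1 => <-.
- by rewrite subn0.
- move=> i iK; rewrite -mulmxA -[X in _ *m (_ *m X)]powm1 -powmD.
  by congr (_ *m powm _ _); lia.
Qed.

(* The chain vectors are linearly independent: in a vanishing combination,
   applying M^j to it kills the rows beyond j and isolates the j-th
   coefficient, so coefficients vanish from the last one downwards. *)
Lemma chain_free : row_free (chain_mx M K x).
Proof.
have indep (a : 'rV_K.+1) : a *m chain_mx M K x = 0 -> a = 0.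
  move=> Ha.
  suff a0 d (j : 'I_K.+1) : (K.+1 - d <= j)%N -> a 0 j = 0.
    by apply/rowP => j; rewrite mxE; apply: (a0 K.+1); rewrite subnn.
  elim: d j => [|d IH] j hj; first by have := ltn_ord j; lia.
  have [|hjd] := leqP (K.+1 - d) j; first exact: IH.
  have jK : (j <= K)%N by rewrite -ltnS.
  have : a *m chain_mx M K x *m powm M j = 0 by rewrite Ha mul0mx.
  rewrite (mulmx_sum_row a) mulmx_suml (bigD1 j) //= big1 ?addr0.
    rewrite rowK -scalemxAl (chain_pow jK (leqnn j)) subnn powm0 mulmx1.
    by move/eqP; rewrite scaler_eq0 (negbTE x1_neq0) orbF => /eqP.
  move=> i ne; rewrite rowK -scalemxAl.
  have [ji | ij] := ltnP j i; first by rewrite IH ?scale0r //; lia.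
  have iK : (i <= K)%N by rewrite -ltnS.
  have ij' : (i < j)%N by rewrite ltn_neqAle ij andbT; apply: contraNneq ne => /val_inj ->.
  by rewrite (chain_pow iK ij) ker_powm ?scaler0 // subn_gt0.
rewrite -kermx_eq0; apply/eqP/row_matrixP => r; rewrite row0.
by apply: indep; rewrite -row_mul mulmx_ker row0.
Qed.

Lemma chain_sub_ker_pow : (K < n)%N -> (chain_mx M K x <= kermx (powm M n))%MS.
Proof.
move=> Kn; rewrite sub_kermx; apply/eqP/row_matrixP => r.
have rK := ltn_ord r.
rewrite row0 row_mul rowK chain_pow; [|lia|lia].
by rewrite ker_powm //; lia.
Qed.

End JordanChain.

Lemma chain_jordan_subspace n (A : 'M[nat]_n) lam K (x : 'rV_n) :
  x *m powm (Bt A lam) K != 0 -> x *m powm (Bt A lam) K *m Bt A lam = 0 -> (K < n)%N ->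
  jordan_subspace A lam <<chain_mx (Bt A lam) K x>>%MS /\
  \rank <<chain_mx (Bt A lam) K x>>%MS = K.+1.
Proof.
move=> x1_neq0 x1M Kn; rewrite genmxE; split; last exact/eqP/chain_free.
split; first by rewrite genmxE; apply: chain_sub_ker_pow.
exists K.+1, (fun j => x *m powm (Bt A lam) (K - j)); split; last exact/eqmxP/genmxE.
by have [] := chain_links x1_neq0 x1M.
Qed.

Lemma chain_head n (M : 'M[algC]_n) k (u : nat -> 'rV_n) K :
  (forall i, (i.+1 < k)%N -> u i.+1 *m M = u i) -> (K < k)%N ->
  u 0%N = u K *m powm M K.
Proof.
move=> Hc Kk.
suff H d : (d <= K)%N -> u (K - d)%N = u K *m powm M d by rewrite -(H K) ?subnn.
elim: d => [|d IH] dK; first by rewrite subn0 powm0 mulmx1.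
rewrite powmS mulmxA -IH; last by lia.
have -> : (K - d = (K - d.+1).+1)%N by lia.
by rewrite Hc //; lia.
Qed.

Lemma pinned_jordan_subspace n (A : 'M[nat]_n) lam k (J1 : 'M[algC]_n) :
  (1 <= k <= n)%N -> \rank J1 = 1%N -> (J1 <= Nsp A lam k)%MS ->
  special_in (Nsp A lam k) J1 ->
  exists W0 : 'M[algC]_n,
    [/\ jordan_subspace A lam W0, \rank W0 = k, (J1 <= W0)%MS &
        forall h : 'rV_n, (h <= Nsp A lam k)%MS -> Pset W0 h -> (h <= J1)%MS].
Proof.
move=> /andP [k_gt0 kn] rkJ1 J1N J1_special.
pose M := Bt A lam; pose K := k.-1.
have kK : k = K.+1 by rewrite /K; lia.
have Kn : (K < n)%N by lia.
have NE : Nsp A lam k = (kermx M :&: powm M K)%MS by [].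
have /rowV0Pn [x1 x1J1 x1_neq0] : J1 != 0 by rewrite -mxrank_eq0 rkJ1.
have ex1 : (x1 :=: J1)%MS.
  by apply/eqmxP; rewrite -(mxrank_leqif_eq x1J1).2 rank_rV x1_neq0 rkJ1.
have : (x1 <= Nsp A lam k)%MS by rewrite ex1.
rewrite NE sub_capmx sub_kermx => /andP [/eqP x1M x1K].
have [r [f [onto same_ker]]] := select_constraints (level_constraints x1) (Nsp A lam k).
have [x xK xQ] := lift_with_constraints onto x1K.
have x1_neq0' : x *m powm M K != 0 by rewrite xK.
have x1M' : x *m powm M K *m M = 0 by rewrite xK.
have [jW0 rkW0] := chain_jordan_subspace x1_neq0' x1M' Kn.
exists <<chain_mx M K x>>%MS; split => //; first by rewrite kK.
  rewrite genmxE -ex1 -xK.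
  by have := row_sub ord0 (chain_mx M K x); rewrite /chain_mx rowK subn0.
(* every row of the chain satisfies the selected constraints, so the pairs
   they select are synchronised by W0 *)
have rowsQ (t : 'I_K.+1) :
    x *m powm M (K - t) *m (rowsub f (level_constraints x1))^T = 0.
  have [-> | t_gt0] := posnP t; last by apply: xQ; have := ltn_ord t; lia.
  by rewrite subn0 xK; apply/rowsub_constraints0/level_constraintsP.
move=> h hN /PsetE hW0; rewrite -ex1.
apply: (special_line_pinned ex1 x1_neq0 J1N J1_special hN).
apply/level_constraintsP/same_ker => //; apply/rowP => s.
rewrite rowsub_constraintsE level_constraintsE mxE.
case: ifP => // /eqP x1s; apply/eqP; rewrite subr_eq0; apply/eqP/hW0.
apply/(synced_eqmx _ _ (genmxE _))/syncedP/forallP => t.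
rewrite [X in X == _]mxE [X in _ == X]mxE.
exact/eqP/(rowsub_level_pair (rowsQ t) x1s).
Qed.

(* The eigenvector u_0 heading a Jordan chain spanning a k-dimensional Jordan
   subspace U lies in N^k, as u_0 = u_(k-1) (A - lam)^(k-1). *)
Lemma jordan_head_in_N n (A : 'M[nat]_n) lam k (U : 'M[algC]_n) :
  (0 < k)%N -> jordan_subspace A lam U -> \rank U = k ->
  exists u0 : 'rV_n, [/\ u0 != 0, (u0 <= U)%MS & (u0 <= Nsp A lam k)%MS].
Proof.
move=> k_gt0 [_ [k' [u [[u_neq0 u0M uM] eU]]]] rkU.
have kk' : (k <= k')%N by rewrite -rkU (eqmx_rank eU) rank_leq_row.
have k'_gt0 : (0 < k')%N by lia.
exists (u 0%N); split; first exact: u_neq0.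
  rewrite (eqmxP eU) -(rowK (fun i : 'I_k' => u i) (Ordinal k'_gt0)).
  exact: row_sub.
rewrite sub_capmx sub_kermx u0M eqxx /= (chain_head uM (K := k.-1)); last by lia.
exact: submxMl.
Qed.

Lemma pinned_line_in_jordan n (A : 'M[nat]_n) lam k (J1 W0 U : 'M[algC]_n) :
  (forall h : 'rV_n, (h <= Nsp A lam k)%MS -> Pset W0 h -> (h <= J1)%MS) ->
  \rank J1 = 1%N -> (0 < k)%N ->
  jordan_subspace A lam U -> \rank U = k -> Psub U W0 -> (J1 <= U)%MS.
Proof.
move=> pinW0 rkJ1 k_gt0 jU rkU PUW0.
have [u0 [u0_neq0 u0U u0N]] := jordan_head_in_N k_gt0 jU rkU.
have u0J1 : (u0 <= J1)%MS by apply: pinW0 => //; apply: PUW0 => R; apply.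
have eu0 : (u0 :=: J1)%MS.
  by apply/eqmxP; rewrite -(mxrank_leqif_eq u0J1).2 rank_rV u0_neq0 rkJ1.
by rewrite -eu0.
Qed.

Unset Implicit Arguments.
Theorem mainTheorem5 (n : nat) (A : 'M[nat]_n) (lam : algC) :
  regular_network A ->
  eigenvalue (Amx A) lam ->
  (1 <= \rank (Gsp A lam))%N ->
  forall k : nat, (1 <= k)%N -> (k <= \rank (Gsp A lam))%N ->
  forall J1 : 'M[algC]_n,
    \rank J1 = 1%N -> (J1 <= Nsp A lam k)%MS -> special_in (Nsp A lam k) J1 ->
  exists W : 'M[algC]_n,
    [/\ special_jordan A lam W, \rank W = k, (W <= Gsp A lam)%MS & (J1 <= W)%MS].
Proof.
move=> _ _ _ k k_gt0 kG J1 rkJ1 J1N J1_special.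
have kn : (1 <= k <= n)%N by rewrite k_gt0 (leq_trans kG (rank_leq_col _)).
have [W0 [jW0 rkW0 J1W0 pinW0]] := pinned_jordan_subspace kn rkJ1 J1N J1_special.
(* W: a candidate with the most synchronised pairs *)
pose Fam U := [/\ jordan_subspace A lam U, \rank U = k, (J1 <= U)%MS & Psub U W0].
have FW0 : Fam W0 by split => // x.
have [W [[jW rkW J1W PWW0] Wmax]] :=
  ex_max_measure (fun U _ => max_card (mem (sync_pairs U))) (ex_intro Fam W0 FW0).
exists W; split => //; last by case: jW.
split => // U jU rkU PUW; left.
have PUW0 : Psub U W0 by move=> y /PUW /PWW0.
rewrite rkW in rkU.
have J1U := pinned_line_in_jordan pinW0 rkJ1 k_gt0 jU rkU PUW0.
by apply: Peq_sync_pairs PUW (Wmax U _); split.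
Qed.
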